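(* For every integer $n\ge 1$ and every integer $k$ with $0\le k\le 2^{n}-2$, $$B_{k+1}(t)B_{2^{n}-k}(t)-B_{k}(t)B_{2^{n}-k-1}(t)=t^{n}.$$
   Context: The Stern polynomials $B_n(t)\in\mathbb{Z}[t]$, $n\ge 0$, are defined by $B_0(t)=0$, $B_1(t)=1$, $B_{2n}(t)=tB_n(t)$ and $B_{2n+1}(t)=B_n(t)+B_{n+1}(t)$ for $n\ge 1$. *)

From HB Require Import structures.
From mathcomp Require Import all_boot all_order all_algebra.
Set Implicit Arguments. Unset Strict Implicit. Unset Printing Implicit Defensive.
Import GRing.Theory.
Local Open Scope ring_scope.

(* Stern polynomials B_n(t) in Z[t]:
   B_0 = 0, B_1 = 1, B_{2n} = t B_n, B_{2n+1} = B_n + B_{n+1}.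
   Defined by recursion with fuel; fuel n suffices (B_n_rec below). *)
Fixpoint stern_aux (fuel : nat) (n : nat) : {poly int} :=
  match fuel with
  | 0%N => 0
  | f.+1 =>
    match n with
    | 0%N => 0
    | 1%N => 1
    | _ => if odd n then stern_aux f n./2 + stern_aux f n./2.+1
           else 'X * stern_aux f n./2
    end
  end.

Definition stern (n : nat) : {poly int} := stern_aux n n.

From HB Require Import structures.
From mathcomp Require Import all_boot all_order all_algebra.
From mathcomp Require Import zify ring.
Import GRing.Theory.
Local Open Scope ring_scope.

(* If [j + d + 1 = 2^(n+1)] then [j] and [d] have opposite parities, and the
   recurrences rewrite [B_(j+1) B_(d+1) - B_j B_d] as [t] times the same
   expression for [j/2], [d/2], whose sum plus one is [2^n]. *)

Lemma stern_aux_fuel_eq f g n :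
  (n <= f)%N -> (n <= g)%N -> stern_aux f n = stern_aux g n.
Proof.
elim: f g n => [|f IHf] [|g] [|[|m]] //= lefn legn.
rewrite negbK; case: ifP => oddm.
- by rewrite (IHf g m./2.+1) ?(IHf g m./2.+2) //; lia.
- by rewrite (IHf g m./2.+1) //; lia.
Qed.

Lemma stern_auxE f n : (n <= f)%N -> stern_aux f n = stern n.
Proof. by move=> lenf; apply: stern_aux_fuel_eq. Qed.

Lemma stern0 : stern 0 = 0. Proof. by []. Qed.

Lemma stern1 : stern 1 = 1. Proof. by []. Qed.

Lemma stern_aux_double f i : stern_aux f.+1 i.+1.*2 = 'X * stern_aux f i.+1.
Proof. by rewrite doubleS [LHS]/= negbK odd_double doubleK. Qed.

Lemma stern_aux_doubleS f i :
  stern_aux f.+1 i.+1.*2.+1 = stern_aux f i.+1 + stern_aux f i.+2.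
Proof. by rewrite doubleS [LHS]/= negbK odd_double uphalf_double. Qed.

Lemma stern_double i : stern i.*2 = 'X * stern i.
Proof.
case: i => [|i]; first by rewrite stern0 mulr0.
by rewrite /stern {1}doubleS stern_aux_double stern_auxE //; lia.
Qed.

Lemma stern_doubleS i : stern i.*2.+1 = stern i + stern i.+1.
Proof.
case: i => [|i]; first by rewrite stern0 add0r.
by rewrite /stern {1}doubleS stern_aux_doubleS !stern_auxE //; lia.
Qed.

Lemma stern_det_pow2 n j d : (j + d.+1 = 2 ^ n)%N ->
  stern j.+1 * stern d.+1 - stern j * stern d = 'X ^+ n.
Proof.
elim: n j d => [|n IHn] j d.
  rewrite expn0 => jd1; have [-> ->] : j = 0%N /\ d = 0%N by lia.
  by rewrite stern0 stern1 mulr0 subr0 mulr1 expr0.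
rewrite expnS -(odd_double_half j) -(odd_double_half d) => jd2.
have jd1 : (j./2 + d./2.+1 = 2 ^ n)%N by lia.
rewrite exprS -(IHn _ _ jd1).
case: (odd j) (odd d) jd2 => [] [] /=; rewrite ?add0n ?add1n => jd2; try lia.
all: by rewrite -doubleS !stern_doubleS !stern_double; ring.
Qed.

Theorem theorem2p5 (n k : nat) :
  (1 <= n)%N -> (k <= 2 ^ n - 2)%N ->
  stern k.+1 * stern (2 ^ n - k) - stern k * stern (2 ^ n - k - 1) = 'X ^+ n.
Proof.
move=> n_gt0 lek.
have two_le_pow : (2 <= 2 ^ n)%N by rewrite -{1}(expn1 2) leq_exp2l.
have {1}-> : (2 ^ n - k = (2 ^ n - k - 1).+1)%N by lia.
by apply: stern_det_pow2; lia.
Qed.
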